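(* Let $E=(A\subset B)\in\mathcal S$ have Klein tableau $\Pi=[\gamma^0,\ldots,\gamma^e;\varphi^2,\ldots,\varphi^e]$ and let $\ell\le e$ be a natural number. Then the embedding $E|^\ell=(A/p^\ell A\subset B/p^\ell A)$ has Klein tableau $$\Pi(E|^\ell)=[\gamma^0,\ldots,\gamma^\ell;\varphi^2,\ldots,\varphi^\ell]=\Pi|^\ell.$$
   Context: Let $R$ be a commutative principal ideal domain, $p$ a generator of a maximal ideal, $k=R/(p)$. A $p$-module is a finite-length $R$-module annihilated by some power of $p$. For a $p$-module $B$, $\mathrm{type}(B)$ is the partition $\beta$ with conjugate $\beta'_i=\dim_kp^{i-1}B/p^iB$. $\mathcal S$ is the category of embeddings $(A\subset B)$ of submodules in $p$-modules. Partitions are drawn with the $i$-th column of length equal to the $i$-th part, rows numbered from the top. Klein tableau of $E=(A\subset B)$, $e$ the exponent of $A$: $\Pi(E)=[\gamma^0,\ldots,\gamma^e;\varphi^2,\ldots,\varphi^e]$ with $\gamma^i=\mathrm{type}(B/p^iA)$, and $\varphi^\ell$ the unique map from the boxes of the skew diagram $\gamma^\ell\setminus\gamma^{\ell-1}$ to positive integers, weakly increasing from left to right in each row, such that for $r\ge1$ the number of boxes in row $m$ with value $r$ equals $(\gamma^{\ell,r})'_m-(\gamma^{\ell,r-1})'_m$, where $\gamma^{\ell,r}=\mathrm{type}\big(B/(p^\ell A+p(p^{\ell-2}A\cap p^rB))\big)$. For $\ell\le e$, the restriction is $\Pi|^\ell=[\gamma^0,\ldots,\gamma^\ell;\varphi^2,\ldots,\varphi^\ell]$.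 *)

From HB Require Import structures.
From mathcomp Require Import all_boot all_order all_algebra.
Set Implicit Arguments. Unset Strict Implicit. Unset Printing Implicit Defensive.
Import GRing.Theory.
Local Open Scope ring_scope.

Definition is_ideal (R : comNzRingType) (I : R -> Prop) : Prop :=
  [/\ I 0, (forall x y, I x -> I y -> I (x + y)) & (forall r x, I x -> I (r * x))].

Definition gen_ideal (R : comNzRingType) (g : R) : R -> Prop :=
  fun x => exists r, x = r * g.

Definition same_set (T : Type) (U V : T -> Prop) : Prop := forall x, U x <-> V x.

Definition is_PID (R : idomainType) : Prop :=
  forall I : R -> Prop, is_ideal I -> exists g : R, same_set I (gen_ideal g).

Definition maximal_gen (R : idomainType) (p : R) : Prop :=
  p \isn't a GRing.unit /\
  forall I : R -> Prop, is_ideal I -> (forall x, gen_ideal p x -> I x) ->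
    same_set I (gen_ideal p) \/ I 1.

Section Modules.
Variables (R : idomainType) (p : R) (B : lmodType R).

Definition submod (U : B -> Prop) : Prop :=
  [/\ U 0, (forall x y, U x -> U y -> U (x + y)) & (forall r x, U x -> U (r *: x))].

Definition subset_ (U V : B -> Prop) := forall x, U x -> V x.
Definition sstrict (U V : B -> Prop) := subset_ U V /\ exists x, V x /\ ~ U x.

Definition schain (c : nat -> B -> Prop) (n : nat) : Prop :=
  (forall i, (i <= n)%N -> submod (c i)) /\ (forall i, (i < n)%N -> sstrict (c i) (c i.+1)).

Definition finite_length : Prop :=
  exists N : nat, forall c n, schain c n -> (n <= N)%N.

Definition p_module : Prop :=
  finite_length /\ exists n : nat, forall b : B, p ^+ n *: b = 0.

Definition sublen (U V : B -> Prop) (n : nat) : Prop :=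
  (exists c, schain c n /\ same_set (c 0%N) U /\ same_set (c n) V) /\
  ~ (exists c, schain c n.+1 /\ same_set (c 0%N) U /\ same_set (c n.+1) V).

Definition addS (U V : B -> Prop) : B -> Prop := fun x => exists u v, U u /\ V v /\ x = u + v.
Definition capS (U V : B -> Prop) : B -> Prop := fun x => U x /\ V x.
Definition pmulS (U : B -> Prop) : B -> Prop := fun x => exists y, U y /\ x = p *: y.
Definition pB (i : nat) : B -> Prop := fun x => exists b, x = p ^+ i *: b.
Definition pA (A : B -> Prop) (i : nat) : B -> Prop := fun x => exists a, A a /\ x = p ^+ i *: a.

(* (type (B/U))'_m = n, for m >= 1, i.e.
   n = dim_k p^(m-1)(B/U) / p^m(B/U) = length of (p^(m-1)B + U) / (p^m B + U)
   (a subquotient annihilated by p, whose k-dimension is its R-length). *)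
Definition cdim (U : B -> Prop) (m n : nat) : Prop :=
  sublen (addS (pB m) U) (addS (pB m.-1) U) n.

(* partitions: nonincreasing sequences of positive parts (parts = column lengths) *)
Definition is_partition (s : seq nat) : bool := sorted geq s && all (fun x => 0 < x)%N s.

Definition conjp (s : seq nat) (m : nat) : nat := count (fun x => m <= x)%N s.

Definition is_type (U : B -> Prop) (beta : seq nat) : Prop :=
  is_partition beta /\ forall m, (1 <= m)%N -> cdim U m (conjp beta m).

Definition exponent (A : B -> Prop) (e : nat) : Prop :=
  (forall a, A a -> p ^+ e *: a = 0) /\
  (forall e', (e' < e)%N -> exists a, A a /\ p ^+ e' *: a <> 0).

(* gamma^{l,r} = type (B / (p^l A + p (p^(l-2) A cap p^r B))) *)
Definition Ulr (A : B -> Prop) (l r : nat) : B -> Prop :=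
  addS (pA A l) (pmulS (capS (pA A (l - 2)) (pB r))).

(* A Klein tableau [gamma^0..gamma^e; phi^2..phi^e] is encoded as a pair
   (gam, phi): gam = [:: gamma^0; ...; gamma^e] (partitions as seq of parts),
   phi = [:: phi^2; ...; phi^e], where phi^l is the list of its rows
   (row m at index m-1, for m = 1 .. number of rows of gamma^l), each row being
   the list of the values of phi^l on the boxes of row m of the skew diagram
   gamma^l \ gamma^(l-1), read from left to right. *)
Definition tableau := (seq (seq nat) * seq (seq (seq nat)))%type.

Definition klein_tableau (A : B -> Prop) (T : tableau) : Prop :=
  let: (gam, phi) := T in
  exists e, exponent A e /\
  size gam = e.+1 /\
  (forall i, (i <= e)%N -> is_type (pA A i) (nth [::] gam i)) /\
  size phi = e.-1 /\
  (forall l, (2 <= l <= e)%N ->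
     let rows := nth [::] phi (l - 2) in
     let g := nth [::] gam l in
     let g' := nth [::] gam l.-1 in
     size rows = head 0%N g /\
     forall m, (1 <= m)%N ->
       let row := nth [::] rows m.-1 in
       [/\ size row = (conjp g m - conjp g' m)%N,
           sorted leq row,
           all (fun x => 0 < x)%N row &
           forall r, (1 <= r)%N ->
             exists a b, cdim (Ulr A l r) m a /\ cdim (Ulr A l r.-1) m b /\
                         (count_mem r row + b)%N = a]).

End Modules.

Definition restrict (l : nat) (T : tableau) : tableau :=
  (take l.+1 T.1, take l.-1 T.2).

From HB Require Import structures.
From mathcomp Require Import all_boot all_order all_algebra.
From mathcomp Require Import zify.
Set Implicit Arguments. Unset Strict Implicit. Unset Printing Implicit Defensive.
Import GRing.Theory.
Local Open Scope ring_scope.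

(* Every submodule entering the tableau of E|^l (the p^i A for i <= l and the
   p^l' A + p (p^(l'-2) A cap p^r B) for l' <= l) contains the kernel p^l A of
   B -> B/p^l A.  Such submodules correspond bijectively to their images, and so
   do strict chains between them, so all the lengths defining the partitions
   gamma^i and the fillings phi^l' are unchanged.  Finally pi(A) has exponent l:
   if p^(e') A were inside p^l A for some e' < l, then p^(e-l+e') A = 0. *)

Section SubmoduleCalculus.
Variables (R : idomainType) (p : R) (T : lmodType R).
Implicit Types U V W : T -> Prop.

Lemma same_set_sym U V : same_set U V -> same_set V U.
Proof. by move=> h x; split=> /h. Qed.

Lemma same_set_trans U V W : same_set U V -> same_set V W -> same_set U W.
Proof. by move=> h1 h2 x; split=> [/h1/h2|/h2/h1]. Qed.

Lemma sublen_same_set U1 U2 V1 V2 n :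
  same_set U1 U2 -> same_set V1 V2 -> sublen U1 V1 n -> sublen U2 V2 n.
Proof.
move=> hU hV [[c [hc [h0 hn]]] hmax]; split.
  by exists c; split; [|split; [apply: same_set_trans h0 hU | apply: same_set_trans hn hV]].
move=> [c' [hc' [h0' hn']]]; apply: hmax; exists c'.
split; [|split; [apply: same_set_trans h0' (same_set_sym hU) | apply: same_set_trans hn' (same_set_sym hV)]] => //.
Qed.

Lemma sublen_same_setE U1 U2 V1 V2 n :
  same_set U1 U2 -> same_set V1 V2 -> (sublen U1 V1 n <-> sublen U2 V2 n).
Proof.
by move=> hU hV; split; apply: sublen_same_set => //; apply: same_set_sym.
Qed.

Lemma addS_same_set U1 U2 V1 V2 :
  same_set U1 U2 -> same_set V1 V2 -> same_set (addS U1 V1) (addS U2 V2).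
Proof.
by move=> hU hV x; split=> -[u [v [/hU hu [/hV hv ->]]]]; exists u, v.
Qed.

Lemma capS_same_set U1 U2 V1 V2 :
  same_set U1 U2 -> same_set V1 V2 -> same_set (capS U1 V1) (capS U2 V2).
Proof. by move=> hU hV x; split=> -[/hU h1 /hV h2]. Qed.

Lemma pmulS_same_set U1 U2 : same_set U1 U2 -> same_set (pmulS p U1) (pmulS p U2).
Proof. by move=> hU x; split=> -[y [/hU hy ->]]; exists y. Qed.

Lemma cdim_same_set U1 U2 m n : same_set U1 U2 -> (cdim p U1 m n <-> cdim p U2 m n).
Proof. by move=> h; apply: sublen_same_setE; apply: addS_same_set. Qed.

Lemma submod_add_sub U x y : submod U -> U x -> U (y - x) -> U y.
Proof. by case=> _ hD _ hx hyx; rewrite -(subrK x y); apply: hD. Qed.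

Lemma submod_addS U V : submod U -> submod V -> submod (addS U V).
Proof.
move=> [u0 uD uZ] [v0 vD vZ]; split.
- by exists 0, 0; rewrite addr0.
- move=> _ _ [a [b [ha [hb ->]]]] [c [d [hc [hd ->]]]].
  by exists (a + c), (b + d); rewrite addrACA; auto.
- move=> r _ [a [b [ha [hb ->]]]].
  by exists (r *: a), (r *: b); rewrite scalerDr; auto.
Qed.

Lemma submod_capS U V : submod U -> submod V -> submod (capS U V).
Proof.
move=> [u0 uD uZ] [v0 vD vZ]; split=> //.
- by move=> x y [hx hy] [hx' hy']; split; auto.
- by move=> r x [hx hy]; split; auto.
Qed.

Lemma submod_pA (A : T -> Prop) i : submod A -> submod (pA p A i).
Proof.
move=> [a0 aD aZ]; split.
- by exists 0; rewrite scaler0.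
- by move=> _ _ [a [ha ->]] [b [hb ->]]; exists (a + b); rewrite scalerDr; auto.
- by move=> r _ [a [ha ->]]; exists (r *: a); rewrite !scalerA mulrC; auto.
Qed.

Lemma submod_pB i : submod (pB p (B:=T) i).
Proof.
split.
- by exists 0; rewrite scaler0.
- by move=> _ _ [a ->] [b ->]; exists (a + b); rewrite scalerDr.
- by move=> r _ [a ->]; exists (r *: a); rewrite !scalerA mulrC.
Qed.

Lemma submod_pmulS U : submod U -> submod (pmulS p U).
Proof.
move=> [u0 uD uZ]; split.
- by exists 0; rewrite scaler0.
- by move=> _ _ [a [ha ->]] [b [hb ->]]; exists (a + b); rewrite scalerDr; auto.
- by move=> r _ [a [ha ->]]; exists (r *: a); rewrite !scalerA mulrC; auto.
Qed.

Lemma submod_Ulr (A : T -> Prop) l r : submod A -> submod (Ulr p A l r).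
Proof.
move=> hA; apply: submod_addS; first exact: submod_pA.
by apply/submod_pmulS/submod_capS; [apply: submod_pA | apply: submod_pB].
Qed.

Lemma pA_le (A : T -> Prop) i j : submod A -> (i <= j)%N ->
  forall x, pA p A j x -> pA p A i x.
Proof.
move=> [_ _ aZ] hij _ [a [ha ->]]; exists (p ^+ (j - i) *: a).
by rewrite scalerA -exprD subnKC; auto.
Qed.

Lemma exponent_uniq (A : T -> Prop) e1 e2 :
  exponent p A e1 -> exponent p A e2 -> e1 = e2.
Proof.
move=> [h1 h1'] [h2 h2']; case: (ltngtP e1 e2) => // lt_e.
- by have [a [/h1 ? []]] := h2' _ lt_e.
- by have [a [/h2 ? []]] := h1' _ lt_e.
Qed.

End SubmoduleCalculus.

Section Quotient.
Variables (R : idomainType) (p : R) (B B' : lmodType R) (pi : {linear B -> B'}).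
Hypothesis pi_surj : forall y : B', exists x : B, pi x = y.
Implicit Types (U V X Y A : B -> Prop).

Definition img (X : B -> Prop) : B' -> Prop := fun y => exists x, X x /\ y = pi x.
Definition preim (Y : B' -> Prop) : B -> Prop := fun x => Y (pi x).

Definition contains_ker (U : B -> Prop) := forall x, pi x = 0 -> U x.

Lemma contains_ker_addSl U V : V 0 -> contains_ker U -> contains_ker (addS U V).
Proof. by move=> v0 hK x /hK hx; exists x, 0; rewrite addr0. Qed.

Lemma contains_ker_addSr U V : V 0 -> contains_ker U -> contains_ker (addS V U).
Proof. by move=> v0 hK x /hK hx; exists 0, x; rewrite add0r. Qed.

Lemma contains_ker_Ulr A l r : submod A ->
  contains_ker (pA p A l) -> contains_ker (Ulr p A l r).
Proof.
move=> hA; apply: contains_ker_addSl.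
by case: (submod_pmulS p (submod_capS (submod_pA p (l - 2) hA) (submod_pB p B r))).
Qed.

Lemma preim_img U : submod U -> contains_ker U -> same_set (preim (img U)) U.
Proof.
move=> hU hK x; split=> [[u [hu eq_pi]]|hx]; last by exists x.
by apply: (submod_add_sub hU hu); apply: hK; rewrite linearB eq_pi subrr.
Qed.

Lemma schain_preim (c : nat -> B' -> Prop) n :
  schain c n -> schain (fun i => preim (c i)) n.
Proof.
move=> [hs hst]; split.
  move=> i /hs [h0 hD hZ]; split; rewrite /preim.
  - by rewrite linear0.
  - by move=> x y hx hy; rewrite linearD; apply: hD.
  - by move=> r x hx; rewrite linearZZ; apply: hZ.
move=> i /hst [hsub [y [hy hny]]]; split; first by move=> x /hsub.
by have [x hx] := pi_surj y; exists x; rewrite /preim hx.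
Qed.

Lemma schain_sub0 (c : nat -> B -> Prop) n : schain c n ->
  forall i, (i <= n)%N -> forall x, c 0%N x -> c i x.
Proof.
move=> [_ hst]; elim=> [//|i IH] hi x /IH hx.
by apply: (hst i hi).1; apply: hx; apply: ltnW.
Qed.

Lemma schain_img (c : nat -> B -> Prop) n :
  schain c n -> contains_ker (c 0%N) -> schain (fun i => img (c i)) n.
Proof.
move=> hc hK; have [hs hst] := hc; split.
  move=> i /hs [h0 hD hZ]; split; rewrite /img.
  - by exists 0; rewrite linear0.
  - by move=> _ _ [x [hx ->]] [y [hy ->]]; exists (x + y); rewrite linearD; auto.
  - by move=> r _ [x [hx ->]]; exists (r *: x); rewrite linearZZ; auto.
move=> i lt_in; have [hsub [y [hy hny]]] := hst i lt_in; split.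
  by move=> _ [x [/hsub hx ->]]; exists x.
exists (pi y); split; first by exists y.
move=> [z [hz eq_pi]]; apply: hny; apply: (submod_add_sub (hs i (ltnW lt_in)) hz).
by apply: (schain_sub0 hc (ltnW lt_in)); apply: hK; rewrite linearB eq_pi subrr.
Qed.

Lemma img_same_set_preim (X : B -> Prop) (Y : B' -> Prop) :
  same_set X (preim Y) -> same_set (img X) Y.
Proof.
move=> hXY y; split=> [[x [/hXY hx ->]] // | hy].
by have [x eq_x] := pi_surj y; exists x; split=> //; apply/hXY; rewrite /preim eq_x.
Qed.

Lemma ex_schain_preim (U V : B' -> Prop) k :
  (exists c, schain c k /\ same_set (c 0%N) U /\ same_set (c k) V) <->
  (exists c, schain c k /\ same_set (c 0%N) (preim U) /\ same_set (c k) (preim V)).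
Proof.
split=> -[c [hc [h0 hk]]].
  exists (fun i => preim (c i)); split; first exact: schain_preim.
  by split=> x; [apply: h0 | apply: hk].
have hK : contains_ker (c 0%N).
  move=> x hx; apply/h0; rewrite /preim hx.
  by have [/h0] := hc.1 0%N (leq0n _); rewrite /preim linear0.
exists (fun i => img (c i)); split; first exact: schain_img.
by split; apply: img_same_set_preim.
Qed.

Lemma sublen_preim (U V : B' -> Prop) n :
  sublen U V n <-> sublen (preim U) (preim V) n.
Proof. by rewrite /sublen ex_schain_preim ex_schain_preim. Qed.

Lemma sublen_img U V n : submod U -> submod V -> contains_ker U -> contains_ker V ->
  sublen (img U) (img V) n <-> sublen U V n.
Proof.
by move=> hU hV hKU hKV; rewrite sublen_preim; apply: sublen_same_setE; apply: preim_img.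
Qed.

Lemma img_addS X Y : same_set (img (addS X Y)) (addS (img X) (img Y)).
Proof.
move=> y; split.
  move=> [_ [[u [v [hu [hv ->]]]] ->]]; exists (pi u), (pi v).
  by rewrite linearD; split; [exists u | split; [exists v|]].
move=> [_ [_ [[u [hu ->]] [[v [hv ->]] ->]]]].
by exists (u + v); rewrite linearD; split=> //; exists u, v.
Qed.

Lemma img_pmulS X : same_set (img (pmulS p X)) (pmulS p (img X)).
Proof.
move=> y; split=> -[_ [[u [hu ->]] ->]].
  by exists (pi u); rewrite linearZZ; split=> //; exists u.
by exists (p *: u); rewrite linearZZ; split=> //; exists u.
Qed.

Lemma img_capS X Y : submod X -> contains_ker X ->
  same_set (img (capS X Y)) (capS (img X) (img Y)).
Proof.
move=> hX hK y; split=> [[x [[hx hy] ->]]|[[x1 [hx1 ->]] [x2 [hx2 eq_pi]]]].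
  by split; exists x.
exists x2; do !split=> //; apply: (submod_add_sub hX hx1).
by apply: hK; rewrite linearB eq_pi subrr.
Qed.

Lemma img_pB m : same_set (img (pB p m)) (pB p m).
Proof.
move=> y; split=> [[_ [[b ->] ->]]|[b' ->]].
  by exists (pi b); rewrite linearZZ.
by have [b <-] := pi_surj b'; exists (p ^+ m *: b); rewrite linearZZ; split=> //; exists b.
Qed.

Lemma img_pA A i : same_set (img (pA p A i)) (pA p (img A) i).
Proof.
move=> y; split=> -[_ [[a [ha ->]] ->]].
  by exists (pi a); rewrite linearZZ; split=> //; exists a.
by exists (p ^+ i *: a); rewrite linearZZ; split=> //; exists a.
Qed.

Lemma img_Ulr A l r : submod A -> contains_ker (pA p A (l - 2)) ->
  same_set (img (Ulr p A l r)) (Ulr p (img A) l r).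
Proof.
move=> hA hK; apply: same_set_trans (img_addS _ _) _.
apply: addS_same_set; first exact: img_pA.
apply: same_set_trans (img_pmulS _) _; apply: pmulS_same_set.
apply: same_set_trans (img_capS _ (submod_pA _ _ hA) hK) _.
by apply: capS_same_set; [apply: img_pA | apply: img_pB].
Qed.

Lemma cdim_img U m n : submod U -> contains_ker U ->
  (cdim p (img U) m n <-> cdim p U m n).
Proof.
move=> hU hK; have pB_U j : submod (addS (pB p j) U).
  by apply: submod_addS => //; apply: submod_pB.
have ker_pB_U j : contains_ker (addS (pB p j) U).
  by apply: contains_ker_addSr hK; exists 0; rewrite scaler0.
have img_pB_U j : same_set (addS (pB p j) (img U)) (img (addS (pB p j) U)).
  apply: same_set_sym; apply: same_set_trans (img_addS _ _) _.
  by apply: addS_same_set => //; apply: img_pB.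
by rewrite /cdim (sublen_same_setE _ (img_pB_U m) (img_pB_U m.-1)) sublen_img.
Qed.

Lemma cdim_pA_img A i m n : submod A -> contains_ker (pA p A i) ->
  (cdim p (pA p (img A) i) m n <-> cdim p (pA p A i) m n).
Proof.
move=> hA hK; rewrite -(cdim_img m n (submod_pA p i hA) hK).
by apply: cdim_same_set; apply: same_set_sym; apply: img_pA.
Qed.

Lemma cdim_Ulr_img A l r m n : submod A ->
    contains_ker (pA p A (l - 2)) -> contains_ker (pA p A l) ->
  (cdim p (Ulr p (img A) l r) m n <-> cdim p (Ulr p A l r) m n).
Proof.
move=> hA hK2 hK; rewrite -(cdim_img m n (submod_Ulr p l r hA) (contains_ker_Ulr r hA hK)).
by apply: cdim_same_set; apply: same_set_sym; apply: img_Ulr.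
Qed.

Lemma exponent_img A e l : submod A -> exponent p A e -> (l <= e)%N ->
  (forall x, pi x = 0 <-> pA p A l x) -> exponent p (img A) l.
Proof.
move=> [_ _ aZ] [annA minA] le_l_e ker_pi; split.
  by move=> _ [a [ha ->]]; rewrite -linearZZ; apply/ker_pi; exists a.
move=> e' lt_e'l; have /minA [a [ha nz_a]] : (e - l + e' < e)%N by lia.
exists (pi a); split; first by exists a.
rewrite -linearZZ => /ker_pi [a' [ha' eq_a']]; apply: nz_a.
by rewrite exprD -scalerA eq_a' scalerA -exprD subnK // annA.
Qed.

End Quotient.

Theorem lemma9 (R : idomainType) (p : R) (hR : is_PID R) (hp : maximal_gen p)
    (B : lmodType R) (A : B -> Prop)
    (hB : p_module p B) (hA : submod A)
    (e : nat) (he : exponent p A e) (l : nat) (hl : (l <= e)%N)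
    (Pi : tableau) (hPi : klein_tableau p A Pi)
    (B' : lmodType R) (pi : {linear B -> B'})
    (hsurj : forall y : B', exists x : B, pi x = y)
    (hker : forall x : B, pi x = 0 <-> pA p A l x) :
  klein_tableau p (fun y : B' => exists a, A a /\ y = pi a) (restrict l Pi).
Proof.
case: Pi hPi => gam phi /= [e0 [/exponent_uniq/(_ he) ->]].
move=> [size_gam [type_gam [size_phi phi_spec]]].
have ker_pA i : (i <= l)%N -> contains_ker pi (pA p A i).
  by move=> le_il x /hker; apply: pA_le.
rewrite /restrict /=; exists l; split; first exact: exponent_img hA he hl hker.
rewrite !size_take size_gam size_phi; split; [|split; [|split]].
- by case: ltnP; lia.
- move=> i le_il; rewrite nth_take ?ltnS //.
  have [part_gam cdim_gam] := type_gam i (leq_trans le_il hl).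
  by split=> // m /cdim_gam /(cdim_pA_img hsurj _ _ hA (ker_pA i le_il)).
- by case: ltnP; lia.
move=> l' /andP [le2l' le_l'l]; rewrite /= !nth_take; try lia.
have /phi_spec [size_rows rows_spec] : (2 <= l' <= e)%N by lia.
split=> // m /rows_spec [? ? ? count_spec].
split=> // r /count_spec [a [b [ha [hb hab]]]].
by exists a, b; rewrite !(cdim_Ulr_img _ _ _ _ hA) //; apply: ker_pA; lia.
Qed.
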